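(* The norm $A\mapsto n\,\omega(A)$ is the minimum element of the class of $M$-norms $\||\cdot\||$ on $\mathbb{M}_n$ satisfying $\|A\|_1\le\||A\||$ for all $A\in\mathbb{M}_n$.
   Context: $\mathbb{M}_n$ is the algebra of complex $n\times n$ matrices with identity $I$; $\|A\|_1=\mathrm{Tr}(|A|)$ is the trace norm and $\omega(A)=\sup\{|\langle x,Ax\rangle|:\|x\|=1\}$ the numerical radius. A norm $\||\cdot\||$ on $\mathbb{M}_n$ is an $M$-norm if $\left\||\sum_{i=1}^k C_i^*X_iC_i\right\||\le \max_{i}\||X_i\||$ for all $k$, all $X_i$ and all $C_i$ with $\sum_{i=1}^k C_i^*C_i=I$. *)

From HB Require Import structures.
From mathcomp Require Import all_boot all_order all_algebra.
From mathcomp Require Import spectral.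
From mathcomp Require Import complex.
From mathcomp Require Import boolp classical_sets reals.
From Stdlib Require Import ClassicalEpsilon.

Set Implicit Arguments.
Unset Strict Implicit.
Unset Printing Implicit Defensive.

Import Order.TTheory GRing.Theory Num.Theory.
Local Open Scope ring_scope.
Local Open Scope sesquilinear_scope.

Section Defs.
Variable R : realType.
Local Notation C := (R[i]).

Definition cmod (z : C) : R := Normc.normc z.

Definition psdmx n (P : 'M[C]_n) : Prop :=
  P ^t* = P /\ forall x : 'cV[C]_n, 0 <= (x ^t* *m P *m x) 0 0.

(* |A| := (A^* A)^{1/2}, the (unique) positive semidefinite square root of A^* A *)
Definition absmx n (A : 'M[C]_n) : 'M[C]_n :=
  epsilon (inhabits 0) (fun P => psdmx P /\ P *m P = A ^t* *m A).

(* trace norm ||A||_1 = Tr |A| (a nonnegative real number) *)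
Definition trnorm n (A : 'M[C]_n) : R := complex.Re (\tr (absmx A)).

Definition numrad n (A : 'M[C]_n) : R :=
  sup [set cmod ((x ^t* *m A *m x) 0 0) |
        x in [set x : 'cV[C]_n | (x ^t* *m x) 0 0 = 1]].

Definition is_mxnorm n (N : 'M[C]_n -> R) : Prop :=
  [/\ forall A, 0 <= N A,
      forall A, N A = 0 -> A = 0,
      forall (c : C) A, N (c *: A) = cmod c * N A
    & forall A B, N (A + B) <= N A + N B].

Definition is_Mnorm n (N : 'M[C]_n -> R) : Prop :=
  is_mxnorm N /\
  forall (k : nat) (X Cs : 'I_k -> 'M[C]_n),
    \sum_(i < k) (Cs i) ^t* *m Cs i = 1%:M ->
    N (\sum_(i < k) (Cs i) ^t* *m X i *m Cs i) <= \big[Num.max/0]_(i < k) N (X i).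

End Defs.

(** Everything is read off the quadratic form [qform A x = x^* A x].
    M-norm: [qform (C^* X C) x = qform X (C x)] and the weights [|C_i x|^2] add up
    to [|x|^2], so [n w] satisfies the M-norm inequality.
    Trace norm: the polar decomposition gives a unitary [Y] with [Y A = |A|];
    writing [Y = Z^* diag(mu) Z] with [|mu_j| = 1] turns [tr |A|] into a sum of
    [n] numbers [mu_j <z_j, A z_j>], each of modulus at most [w(A)].
    Minimality: for a unit vector [x], the matrices [C_i = x e_i^T] satisfy
    [sum C_i^* C_i = I] and [sum C_i^* A C_i = <x, A x> I], so an M-norm [N]
    dominating the trace norm has [N(A) >= N(<x, A x> I) >= n |<x, A x>|]. *)

From mathcomp Require Import all_boot all_order all_algebra.
From mathcomp Require Import spectral complex.
From mathcomp Require Import boolp classical_sets reals.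
From Stdlib Require Import ClassicalEpsilon.

Set Implicit Arguments.
Unset Strict Implicit.
Unset Printing Implicit Defensive.

Import Order.TTheory GRing.Theory Num.Theory.
Local Open Scope complex_scope.
Local Open Scope ring_scope.
Local Open Scope sesquilinear_scope.

Section ComplexModulus.
Variable R : realType.
Implicit Types z w : R[i].

Lemma cmodE z : (cmod z)%:C = `|z|. Proof. by []. Qed.

Lemma cmod_ge0 z : 0 <= cmod z.
Proof. by have := normr_ge0 z; rewrite -cmodE -[0 : R[i]]/(0%:C) lecR. Qed.

Lemma cmod0 : cmod (0 : R[i]) = 0. Proof. exact: Normc.normc0. Qed.

Lemma cmod_le z (r : R) : (cmod z <= r) = (`|z| <= r%:C).
Proof. by rewrite -lecR cmodE. Qed.

Lemma cmodM z w : cmod (z * w) = cmod z * cmod w.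
Proof. exact: Normc.normcM. Qed.

Lemma cmodV z : cmod z^-1 = (cmod z)^-1.
Proof. exact: Normc.normcV. Qed.

Lemma ger0_cmod z : 0 <= z -> cmod z = complex.Re z.
Proof. by move=> z0; apply: complexI; rewrite cmodE ger0_norm // RRe_real ?ger0_real. Qed.

Lemma cmod_sum I (r : seq I) (P : pred I) (F : I -> R[i]) :
  cmod (\sum_(i <- r | P i) F i) <= \sum_(i <- r | P i) cmod (F i).
Proof.
by rewrite cmod_le rmorph_sum (le_trans (ler_norm_sum _ _ _)) // ler_sum.
Qed.

End ComplexModulus.

Lemma trmxC_mul (R : realType) m p q (M : 'M[R[i]]_(m, p)) (N : 'M_(p, q)) :
  (M *m N)^t* = N^t* *m M^t*.
Proof. by rewrite trmx_mul map_mxM. Qed.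

Lemma trmxC_scale (R : realType) m p (c : R[i]) (M : 'M[R[i]]_(m, p)) :
  (c *: M)^t* = c^* *: M^t*.
Proof. by apply/matrixP => i j; rewrite !mxE rmorphM. Qed.

Lemma trmxC_diag (R : realType) m (d : 'rV[R[i]]_m) :
  (diag_mx d)^t* = diag_mx (\row_j (d 0 j)^*).
Proof.
by rewrite tr_diag_mx map_diag_mx; congr diag_mx; apply/rowP => j; rewrite !mxE.
Qed.

Lemma trmxC_delta (R : realType) m p (i : 'I_m) (j : 'I_p) :
  (delta_mx i j : 'M[R[i]]_(m, p))^t* = delta_mx j i.
Proof. by apply/matrixP => a b; rewrite !mxE rmorph_nat andbC. Qed.

Lemma trmxC0 (R : realType) m p : (0 : 'M[R[i]]_(m, p))^t* = 0.
Proof. by apply/matrixP => i j; rewrite !mxE conjC0. Qed.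

Lemma trmxC_add (R : realType) m p (M N : 'M[R[i]]_(m, p)) :
  (M + N)^t* = M^t* + N^t*.
Proof. by apply/matrixP => i j; rewrite !mxE rmorphD. Qed.

Section QuadraticForm.
Variables (R : realType) (n : nat).
Local Notation C := R[i].
Implicit Types (A B M X : 'M[C]_n) (x : 'cV[C]_n).

Definition qform A x : C := (x^t* *m A *m x) 0 0.
Definition sqnorm x : C := (x^t* *m x) 0 0.

Lemma sqnormE x : sqnorm x = \sum_i `|x i 0| ^+ 2.
Proof. by rewrite /sqnorm !mxE; apply: eq_bigr => i _; rewrite !mxE normCKC. Qed.

Lemma sqnorm_ge0 x : 0 <= sqnorm x.
Proof. by rewrite sqnormE sumr_ge0 // => i _; rewrite exprn_ge0. Qed.

Lemma sqnorm_eq0 x : sqnorm x = 0 -> x = 0.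
Proof.
rewrite sqnormE => /psumr_eq0P x0; apply/matrixP => i j; rewrite ord1 mxE.
by apply/eqP; rewrite -normr_eq0 -sqrf_eq0 x0 // => k _; rewrite exprn_ge0.
Qed.

Lemma qformE A x : qform A x = \sum_j (\sum_i (x i 0)^* * A i j) * x j 0.
Proof.
rewrite /qform !mxE; apply: eq_bigr => j _; rewrite !mxE; congr (_ * _).
by apply: eq_bigr => i _; rewrite !mxE.
Qed.

Lemma qform1 x : qform 1%:M x = sqnorm x.
Proof. by rewrite /qform mulmx1. Qed.

Lemma qformZ (c : C) A x : qform (c *: A) x = c * qform A x.
Proof. by rewrite /qform -scalemxAr -scalemxAl mxE. Qed.

Lemma qformD A B x : qform (A + B) x = qform A x + qform B x.
Proof. by rewrite /qform mulmxDr mulmxDl mxE. Qed.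

Lemma qform_sum I (r : seq I) (P : pred I) (F : I -> 'M[C]_n) x :
  qform (\sum_(i <- r | P i) F i) x = \sum_(i <- r | P i) qform (F i) x.
Proof. by rewrite /qform mulmx_sumr mulmx_suml summxE. Qed.

Lemma qform_conj M X x : qform (M^t* *m X *m M) x = qform X (M *m x).
Proof. by rewrite /qform trmxC_mul !mulmxA. Qed.

Lemma sqnorm_mul M x : sqnorm (M *m x) = qform (M^t* *m M) x.
Proof. by rewrite /qform /sqnorm trmxC_mul !mulmxA. Qed.

Lemma qform_scalev (c : C) A x : qform A (c *: x) = c^* * c * qform A x.
Proof.
by rewrite /qform trmxC_scale -!scalemxAl -scalemxAr !mxE mulrA.
Qed.

Definition normalize x := (sqrtC (sqnorm x))^-1 *: x.

Lemma normalizeK x : x != 0 ->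
  (sqrtC (sqnorm x))^-1^* * (sqrtC (sqnorm x))^-1 * sqnorm x = 1.
Proof.
move=> x0; have s0 : 0 < sqnorm x.
  by rewrite lt_def sqnorm_ge0 andbT; apply: contra x0 => /eqP/sqnorm_eq0 ->.
by rewrite geC0_conj ?invr_ge0 ?sqrtC_ge0 ?ltW // -expr2 exprVn sqrtCK mulVf ?gt_eqF.
Qed.

Lemma sqnorm_normalize x : x != 0 -> sqnorm (normalize x) = 1.
Proof. by move=> x0; rewrite -qform1 qform_scalev qform1 normalizeK. Qed.

Lemma qform_normalize A x : qform A x = sqnorm x * qform A (normalize x).
Proof.
have [->|x0] := eqVneq x 0; first by rewrite /qform /sqnorm !mulmx0 !mxE mul0r.
by rewrite qform_scalev mulrA [sqnorm x * _]mulrC normalizeK ?mul1r.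
Qed.

End QuadraticForm.

Section NumericalRadius.
Variables (R : realType) (n : nat).
Local Notation C := R[i].
Implicit Types (A B : 'M[C]_n) (x : 'cV[C]_n).

Local Notation nrange A :=
  [set cmod (qform A x) | x in [set x : 'cV[C]_n | sqnorm x = 1]]%classic.

Lemma numradE A : numrad A = sup (nrange A). Proof. by []. Qed.

Lemma unit_entry_le1 x i : sqnorm x = 1 -> `|x i 0| <= 1.
Proof.
move=> x1; rewrite -(@expr_le1 _ 2) // -x1 sqnormE (bigD1 i) //= lerDl.
by rewrite sumr_ge0 // => j _; rewrite exprn_ge0.
Qed.

Lemma qform_unit_le A x : sqnorm x = 1 -> `|qform A x| <= \sum_j \sum_i `|A i j|.
Proof.
move=> x1; rewrite qformE (le_trans (ler_norm_sum _ _ _)) // ler_sum // => j _.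
rewrite normrM (le_trans (ler_piMr _ (unit_entry_le1 j x1))) //.
rewrite (le_trans (ler_norm_sum _ _ _)) // ler_sum // => i _.
by rewrite normrM norm_conjC ler_piMl ?unit_entry_le1.
Qed.

Lemma has_ubound_nrange A : has_ubound (nrange A).
Proof.
have S0 : 0 <= \sum_j \sum_i `|A i j|.
  by rewrite sumr_ge0 // => j _; rewrite sumr_ge0.
exists (complex.Re (\sum_j \sum_i `|A i j|)) => _ [x x1 <-].
by rewrite cmod_le RRe_real ?ger0_real ?qform_unit_le.
Qed.

Lemma numrad_ge_qform A x : sqnorm x = 1 -> cmod (qform A x) <= numrad A.
Proof. by move=> x1; apply: ub_le_sup; [apply: has_ubound_nrange | exists x]. Qed.

Lemma numrad_le A r : 0 <= r ->
  (forall x, sqnorm x = 1 -> cmod (qform A x) <= r) -> numrad A <= r.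
Proof.
move=> r0 Ar; rewrite numradE.
have [[s As]|/set0P/negP/negPn/eqP->] := pselect (nrange A !=set0)%classic.
  by apply: ge_sup; [exists s | move=> _ [x x1 <-]; apply: Ar].
by rewrite sup0.
Qed.

Lemma numrad_ge0 A : 0 <= numrad A.
Proof.
rewrite numradE.
have [[s As]|/set0P/negP/negPn/eqP->] := pselect (nrange A !=set0)%classic.
  by case: (As) => x x1 xs; rewrite (le_trans _ (numrad_ge_qform A x1)) // cmod_ge0.
by rewrite sup0.
Qed.

Lemma qform_le_numrad A x : cmod (qform A x) <= numrad A * complex.Re (sqnorm x).
Proof.
have [->|x0] := eqVneq x 0.
  by rewrite /qform /sqnorm !mulmx0 !mxE cmod0 /= mulr0.
rewrite qform_normalize cmodM ger0_cmod ?sqnorm_ge0 // mulrC.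
rewrite ler_wpM2r ?numrad_ge_qform ?sqnorm_normalize //.
by rewrite -ger0_cmod ?sqnorm_ge0 ?cmod_ge0.
Qed.

Lemma numradZ (c : C) A : numrad (c *: A) = cmod c * numrad A.
Proof.
have numradZ_le d B : numrad (d *: B) <= cmod d * numrad B.
  apply: numrad_le => [|x x1]; first by rewrite mulr_ge0 ?cmod_ge0 ?numrad_ge0.
  by rewrite qformZ cmodM ler_wpM2l ?cmod_ge0 ?numrad_ge_qform.
apply/eqP; rewrite eq_le numradZ_le /=.
have [->|c0] := eqVneq c 0; first by rewrite cmod0 mul0r numrad_ge0.
have := numradZ_le c^-1 (c *: A); rewrite scalerA mulVf // scale1r cmodV.
rewrite ler_pdivlMl // lt_def cmod_ge0 andbT.
by apply: contra c0 => /eqP/Normc.eq0_normc->.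
Qed.

Lemma numradD A B : numrad (A + B) <= numrad A + numrad B.
Proof.
apply: numrad_le => [|x x1]; first by rewrite addr_ge0 ?numrad_ge0.
rewrite qformD (le_trans (le_normcD _ _)) //.
by rewrite lerD ?numrad_ge_qform.
Qed.

Lemma qform_addv A u v : qform A (u + v) =
  qform A u + (u^t* *m A *m v) 0 0 + (v^t* *m A *m u) 0 0 + qform A v.
Proof.
rewrite /qform trmxC_add 2!mulmxDl 2!mulmxDr.
move: (u^t* *m A *m u) (u^t* *m A *m v) (v^t* *m A *m u) (v^t* *m A *m v).
by move=> a b c d; rewrite !mxE !addrA.
Qed.

(* Polarization: the entries [A i j] are recovered from [qform A] at
   [e_i + e_j] and [e_i + 'i e_j]. *)
Lemma qform_eq0 A : (forall x, qform A x = 0) -> A = 0.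
Proof.
move=> A0; apply/matrixP => i j; rewrite mxE.
pose e k : 'cV[C]_n := delta_mx k 0.
have entry k l : ((e k)^t* *m A *m e l) 0 0 = A k l.
  by rewrite trmxC_delta -rowE -colE !mxE.
have polar c : c * A i j + c^* * A j i = 0.
  have := A0 (e i + c *: e j).
  rewrite qform_addv !A0 add0r addr0 -scalemxAr trmxC_scale -!scalemxAl.
  by rewrite [(c *: (_ : 'M[C]_1)) 0 0]mxE [(c^* *: (_ : 'M[C]_1)) 0 0]mxE !entry.
have /eqP := polar 'i; rewrite conjCi mulNr subr_eq0 => /eqP /mulfI Aji.
have := polar 1; rewrite conjC1 !mul1r -Aji ?neq0Ci // => /eqP.
by rewrite -mulr2n mulrn_eq0 => /eqP.
Qed.

Lemma numrad_eq0 A : numrad A = 0 -> A = 0.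
Proof.
move=> A0; apply: qform_eq0 => x; apply: Normc.eq0_normc; apply/eqP.
by rewrite eq_le cmod_ge0 andbT (le_trans (qform_le_numrad A x)) // A0 mul0r.
Qed.

Lemma numrad_sum_conj_le k (X Cs : 'I_k -> 'M[C]_n) :
  \sum_i (Cs i)^t* *m Cs i = 1%:M ->
  numrad (\sum_i (Cs i)^t* *m X i *m Cs i) <= \big[Num.max/0]_i numrad (X i).
Proof.
move=> CsI; set m := \big[Num.max/0]_i numrad (X i).
apply: numrad_le => [|x x1]; first exact: bigmax_ge_id.
rewrite qform_sum (le_trans (cmod_sum _ _ _)) //.
apply: (@le_trans _ _ (\sum_i m * complex.Re (sqnorm (Cs i *m x)))).
  apply: ler_sum => i _; rewrite qform_conj (le_trans (qform_le_numrad _ _)) //.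
  by rewrite ler_wpM2r ?le_bigmax // -ger0_cmod ?sqnorm_ge0 ?cmod_ge0.
under eq_bigr do rewrite sqnorm_mul.
by rewrite -mulr_sumr -raddf_sum /= -qform_sum CsI qform1 x1 mulr1.
Qed.
End NumericalRadius.

Section Spectral.
Variables (R : realType) (n : nat).
Local Notation C := R[i].
Implicit Types (A B M P U W Y : 'M[C]_n) (d e : 'rV[C]_n) (x y : 'cV[C]_n).

Local Notation spec W d := (W^t* *m diag_mx d *m W).

Lemma unitarymx_trmxC_mul W : W \is unitarymx -> W^t* *m W = 1%:M.
Proof. by move=> Wu; rewrite -[W^t*]mul1mx mulmxKtV. Qed.

Lemma normal_spectralE A : A \is normalmx ->
  A = spec (spectralmx A) (spectral_diag A).
Proof. by move=> /orthomx_spectralP {1}->; rewrite invmx_unitary ?spectral_unitarymx. Qed.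

Lemma qform_rowC W M j : qform M ((row j W)^t*) = (W *m M *m W^t*) j j.
Proof.
rewrite /qform trmxCK -row_mul !mxE; apply: eq_bigr => k _.
by rewrite !mxE.
Qed.

Lemma sqnorm_rowC W j : W \is unitarymx -> sqnorm ((row j W)^t*) = 1.
Proof.
by move=> /unitarymxP Wu; rewrite -qform1 qform_rowC mulmx1 Wu mxE eqxx.
Qed.

Lemma qform_spec W d j : W \is unitarymx -> qform (spec W d) ((row j W)^t*) = d 0 j.
Proof.
move=> /unitarymxP Wu; rewrite qform_rowC !mulmxA Wu mul1mx -mulmxA Wu mulmx1.
by rewrite mxE eqxx mulr1n.
Qed.

Lemma mxtrace_spec W d : W \is unitarymx -> \tr (spec W d) = \sum_j d 0 j.
Proof.
by move=> Wu; rewrite mxtrace_mulC mulmxA (unitarymxP Wu) mul1mx mxtrace_diag.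
Qed.

Lemma mulmx_spec W d e : W \is unitarymx ->
  spec W d *m spec W e = spec W (\row_j (d 0 j * e 0 j)).
Proof.
by move=> Wu; rewrite 2!mulmxA (mulmxtVK _ Wu) -(mulmxA (W^t*)) mulmx_diag.
Qed.

Lemma trmxC_spec W d : (spec W d)^t* = spec W (\row_j (d 0 j)^*).
Proof.
by rewrite !trmxC_mul trmxCK trmxC_diag mulmxA.
Qed.

Lemma qform_diag d x : qform (diag_mx d) x = \sum_j d 0 j * `|x j 0| ^+ 2.
Proof.
rewrite /qform mul_mx_diag !mxE; apply: eq_bigr => j _.
by rewrite !mxE mulrAC normCKC mulrC.
Qed.

Lemma psdmx_spec W d : (forall j, 0 <= d 0 j) -> psdmx (spec W d).
Proof.
move=> d0; split => [|x].
  by rewrite trmxC_spec; congr (spec W _); apply/rowP => j; rewrite mxE geC0_conj.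
rewrite -/(qform _ x) qform_conj qform_diag sumr_ge0 // => j _.
by rewrite mulr_ge0 ?exprn_ge0.
Qed.

Lemma psdmx_gram A : psdmx (A^t* *m A).
Proof.
split => [|x]; first by rewrite trmxC_mul trmxCK.
by rewrite -/(qform _ x) -sqnorm_mul sqnorm_ge0.
Qed.

Lemma psdmx_normal P : psdmx P -> P \is normalmx.
Proof. by case=> PC _; rewrite qualifE PC. Qed.

Lemma psdmx_spectral_diag_ge0 P j : psdmx P -> 0 <= spectral_diag P 0 j.
Proof.
move=> Ppsd; rewrite -(qform_spec _ j (spectral_unitarymx P)).
by rewrite -normal_spectralE ?psdmx_normal //; apply: Ppsd.2.
Qed.

Lemma exists_psd_sqrt A : exists P, psdmx P /\ P *m P = A^t* *m A.
Proof.
set G := A^t* *m A; set W := spectralmx G; set d := spectral_diag G.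
have d0 j : 0 <= d 0 j by apply: psdmx_spectral_diag_ge0; apply: psdmx_gram.
have Wu : W \is unitarymx := spectral_unitarymx G.
have GE : G = spec W d by apply/normal_spectralE/psdmx_normal/psdmx_gram.
exists (spec W (\row_j sqrtC (d 0 j))); split.
  by apply: psdmx_spec => j; rewrite mxE sqrtC_ge0.
rewrite mulmx_spec // [RHS]GE.
by congr (spec W _); apply/rowP => j; rewrite !mxE -expr2 sqrtCK.
Qed.

Lemma absmx_spec A : psdmx (absmx A) /\ absmx A *m absmx A = A^t* *m A.
Proof. exact: (epsilon_spec (inhabits 0) _ (exists_psd_sqrt A)). Qed.

Local Notation sqr d := (\row_j d 0 j ^+ 2).

Lemma sqnorm_col B j : sqnorm (col j B) = (B^t* *m B) j j.
Proof. by rewrite /sqnorm !mxE; apply: eq_bigr => k _; rewrite !mxE. Qed.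

Lemma exists_unit_lker B : B \notin unitmx -> exists2 y, sqnorm y = 1 & y^t* *m B = 0.
Proof.
move=> Bn; have : kermx B != 0 by rewrite kermx_eq0 row_free_unit.
case/rowV0Pn => v /sub_kermxP vB v0.
have vC0 : v^t* != 0.
  by apply: contraNneq v0 => /(congr1 (fun u => u^t*)); rewrite trmxCK trmxC0 => ->.
exists (normalize (v^t*)); first exact: sqnorm_normalize.
by rewrite /normalize trmxC_scale trmxCK -scalemxAl vB scaler0.
Qed.

Lemma gram_polar_unit B d : (forall j, 0 < d 0 j) -> B^t* *m B = diag_mx (sqr d) ->
  B *m diag_mx (\row_j (d 0 j)^-1) \is unitarymx.
Proof.
move=> d0 BB; apply/unitarymxP/mulmx1C.
rewrite trmxC_mul trmxC_diag mulmxA -(mulmxA _ (B^t*)) BB !mulmx_diag.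
rewrite -diag_const_mx; congr diag_mx; apply/rowP => j; rewrite !mxE geC0_conj.
  by rewrite mulrC mulrA -expr2 exprVn mulVf // expf_neq0 // gt_eqF.
by rewrite invr_ge0 ltW.
Qed.

Lemma gram_extend B d y j0 : d 0 j0 = 0 -> sqnorm y = 1 -> y^t* *m B = 0 ->
  B^t* *m B = diag_mx (sqr d) ->
  let B' := B + y *m delta_mx 0 j0 in
  B'^t* *m B' = diag_mx (sqr (d + delta_mx 0 j0)).
Proof.
move=> dj0 y1 yB BB B'; set e : 'rV[C]_n := delta_mx 0 j0.
have yy : y^t* *m y = 1%:M by rewrite [LHS]mx11_scalar -/(sqnorm y) y1.
have By : B^t* *m y = 0 by rewrite -[y]trmxCK -trmxC_mul yB trmxC0.
have ee : e^t* *m e = delta_mx j0 j0 by rewrite trmxC_delta mul_delta_mx.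
have sqrD : sqr (d + e) = sqr d + e.
  apply/rowP => j; rewrite !mxE eqxx /=; have [->|_] := eqVneq j j0.
    by rewrite dj0 add0r expr1n expr0n add0r.
  by rewrite mulr0n !addr0.
have diag_e : diag_mx e = delta_mx j0 j0.
  apply/matrixP => a b; rewrite !mxE eqxx /=.
  have [->|_] := eqVneq a j0; last by rewrite mul0rn.
  by rewrite eq_sym; case: (_ == _).
rewrite /B' trmxC_add trmxC_mul mulmxDl !mulmxDr BB -!mulmxA yB (mulmxA (B^t*)) By.
by rewrite (mulmxA (y^t*)) yy mul1mx ee !mulmx0 mul0mx addr0 add0r -diag_e -raddfD sqrD.
Qed.

(* Induction on the number of zero entries of [d]: the column of [B] at a zero
   entry vanishes, and is replaced by a unit vector orthogonal to the range of [B]. *)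
Lemma gram_polar B d : (forall j, 0 <= d 0 j) -> B^t* *m B = diag_mx (sqr d) ->
  exists2 U, U \is unitarymx & B = U *m diag_mx d.
Proof.
move: {2}#|[pred j | d 0 j == 0]| (erefl #|[pred j | d 0 j == 0]|) => m.
elim: m B d => [|m IHm] B d zeros d0 BB.
  have dpos j : 0 < d 0 j.
    by rewrite lt_def d0 andbT; have := card0_eq zeros j; rewrite !inE => ->.
  exists (B *m diag_mx (\row_j (d 0 j)^-1)); first exact: gram_polar_unit.
  rewrite -mulmxA mulmx_diag -[B in LHS]mulmx1 -diag_const_mx; congr (_ *m diag_mx _).
  by apply/rowP => j; rewrite !mxE mulVf ?gt_eqF.
have /card_gt0P[j0] : (0 < #|[pred j | (d 0 j == 0)%R]|)%N by rewrite zeros.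
rewrite inE => /eqP dj0.
have Bj0 : col j0 B = 0.
  by apply: sqnorm_eq0; rewrite sqnorm_col BB mxE eqxx mulr1n mxE dj0 expr0n.
have Bn : B \notin unitmx.
  apply/negP => Bu; have := colE j0 B; rewrite Bj0 => /esym/(congr1 (mulmx (invmx B))).
  rewrite mulKmx // mulmx0 => /matrixP/(_ j0 0); rewrite !mxE !eqxx => /eqP.
  by rewrite oner_eq0.
have [y y1 yB] := exists_unit_lker Bn.
have zeros' : #|[pred k | (d + delta_mx 0 j0) 0 k == 0]| = m.
  move: zeros; rewrite (cardD1 j0) inE dj0 eqxx /= => -[<-].
  apply: eq_card => k; rewrite !inE !mxE eqxx /=; have [->|_] := eqVneq k j0.
    by rewrite dj0 add0r oner_eq0.
  by rewrite /= mulr0n addr0.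
have d0' j : 0 <= (d + delta_mx 0 j0) 0 j by rewrite !mxE addr_ge0 ?ler0n.
have [U Uu BU] := IHm _ _ zeros' d0' (gram_extend dj0 y1 yB BB).
exists U => //; apply/matrixP => a j; move/matrixP/(_ a j): BU.
rewrite !mul_mx_diag !mxE big_ord1 !mxE eqxx /=; have [->|_] := eqVneq j j0.
  by rewrite dj0 mulr0; move/matrixP/(_ a 0): Bj0; rewrite !mxE.
by rewrite mulr0n addr0 mulr0 addr0.
Qed.

Lemma polar_decomposition A P : psdmx P -> P *m P = A^t* *m A ->
  exists2 Y, Y \is unitarymx & Y *m A = P.
Proof.
move=> Ppsd PP; set W := spectralmx P; set e := spectral_diag P.
have Wu : W \is unitarymx := spectral_unitarymx P.
have PE : P = spec W e := normal_spectralE (psdmx_normal Ppsd).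
have e0 j : 0 <= e 0 j := psdmx_spectral_diag_ge0 j Ppsd.
have AWAW : (A *m W^t*)^t* *m (A *m W^t*) = diag_mx (sqr e).
  rewrite trmxC_mul trmxCK mulmxA -(mulmxA W) -PP PE mulmx_spec //.
  rewrite !mulmxA (unitarymxP Wu) mul1mx (mulmxtVK _ Wu).
  by congr diag_mx; apply/rowP => j; rewrite !mxE expr2.
have [U Uu AU] := gram_polar e0 AWAW.
exists (W^t* *m U^t*); first by rewrite mul_unitarymx ?trmxC_unitary.
rewrite -[A](mulmxKtV _ Wu) // AU -!mulmxA (mulmxA (U^t*)) (unitarymx_trmxC_mul Uu).
by rewrite mul1mx PE mulmxA.
Qed.

Lemma mxtrace_psd P : psdmx P -> \tr P = \sum_j spectral_diag P 0 j.
Proof.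
move=> Ppsd; rewrite {1}(normal_spectralE (psdmx_normal Ppsd)).
by rewrite mxtrace_spec ?spectral_unitarymx.
Qed.

Lemma mxtrace_diag_mul (d : 'rV[C]_n) A : \tr (diag_mx d *m A) = \sum_j d 0 j * A j j.
Proof. by rewrite mul_diag_mx /mxtrace; apply: eq_bigr => j _; rewrite mxE. Qed.

Lemma mxtrace_unitary_mul_le Y A : Y \is unitarymx ->
  cmod (\tr (Y *m A)) <= n%:R * numrad A.
Proof.
move=> Yu; set Z := spectralmx Y; set mu := spectral_diag Y.
have Zu : Z \is unitarymx := spectral_unitarymx Y.
have YE : Y = spec Z mu.
  by apply: normal_spectralE; rewrite qualifE (unitarymxP Yu) unitarymx_trmxC_mul.
have mu1 j : cmod (mu 0 j) = 1.
  have := congr1 (fun M => qform M ((row j Z)^t*)) (unitarymxP Yu).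
  rewrite /= YE trmxC_spec mulmx_spec // qform_spec // qform1 sqnorm_rowC // !mxE.
  move=> /eqP; rewrite -normCK sqrp_eq1 // => /eqP normmu.
  by apply: complexI; rewrite cmodE normmu.
have trE : \tr (Y *m A) = \sum_j mu 0 j * qform A ((row j Z)^t*).
  rewrite YE -!mulmxA mxtrace_mulC -!mulmxA mxtrace_diag_mul.
  by apply: eq_bigr => j _; rewrite qform_rowC !mulmxA.
rewrite trE (le_trans (cmod_sum _ _ _)) // mulr_natl -[X in _ *+ X]card_ord -sumr_const.
by apply: ler_sum => j _; rewrite cmodM mu1 mul1r numrad_ge_qform ?sqnorm_rowC.
Qed.

Lemma trnorm_le_numrad A : trnorm A <= n%:R * numrad A.
Proof.
have [Ppsd PP] := absmx_spec A.
have [Y Yu YA] := polar_decomposition Ppsd PP.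
have tr0 : 0 <= \tr (absmx A).
  by rewrite mxtrace_psd // sumr_ge0 // => j _; apply: psdmx_spectral_diag_ge0.
by rewrite /trnorm -ger0_cmod // -YA mxtrace_unitary_mul_le.
Qed.

Lemma trnorm_scalar (c : C) : trnorm (c%:M : 'M[C]_n) = n%:R * cmod c.
Proof.
have [Ppsd PP] := absmx_spec (c%:M : 'M[C]_n); set P := absmx _ in Ppsd PP *.
set W := spectralmx P; set e := spectral_diag P.
have Wu : W \is unitarymx := spectral_unitarymx P.
have ej j : e 0 j = `|c|.
  have := qform_spec (\row_j (e 0 j * e 0 j)) j Wu.
  rewrite -mulmx_spec // -normal_spectralE ?psdmx_normal // PP.
  rewrite tr_scalar_mx map_scalar_mx -scalar_mxM -scalemx1 qformZ qform1.
  rewrite sqnorm_rowC // mulr1 mxE -normCKC => /eqP; rewrite -expr2 eq_sym eqrXn2 //.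
    by move=> /eqP.
  exact: psdmx_spectral_diag_ge0.
rewrite /trnorm mxtrace_psd // (eq_bigr _ (fun j _ => ej j)) sumr_const card_ord.
by rewrite -cmodE -rmorphMn /= mulr_natl.
Qed.

End Spectral.

Section Minimality.
Variables (R : realType) (n : nat).
Local Notation C := R[i].
Implicit Types (A X : 'M[C]_n) (x : 'cV[C]_n) (N : 'M[C]_n -> R).

Lemma Mnorm_numrad : is_Mnorm (fun A => n%:R * numrad A).
Proof.
split; first split.
- by move=> A; rewrite mulr_ge0 ?ler0n ?numrad_ge0.
- move=> A /eqP; rewrite mulf_eq0 => /orP[|/eqP/numrad_eq0 //].
  by rewrite pnatr_eq0 => /eqP n0; move: A; rewrite n0 => A; rewrite [A]flatmx0.
- by move=> c A; rewrite numradZ mulrCA.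
- by move=> A B; rewrite -mulrDr ler_wpM2l ?ler0n ?numradD.
move=> k X Cs CsI; rewrite (le_trans (ler_wpM2l (ler0n _ n) (numrad_sum_conj_le X CsI))) //.
by rewrite (big_morph _ (fun a b => maxr_pMr a b (ler0n _ n)) (mulr0 _)).
Qed.

Lemma sandwich_col_delta X x (i : 'I_n) :
  (x *m delta_mx 0 i)^t* *m X *m (x *m delta_mx 0 i) = qform X x *: delta_mx i i.
Proof.
rewrite trmxC_mul trmxC_delta -!mulmxA (mulmxA X) (mulmxA (x^t*)) (mulmxA (x^t*) X).
rewrite [x^t* *m X *m x]mx11_scalar.
by rewrite mul_scalar_mx -scalemxAr mul_delta_mx.
Qed.

Lemma sum_delta_diag : \sum_(i < n) (delta_mx i i : 'M[C]_n) = 1%:M.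
Proof.
rewrite -diag_const_mx diag_mx_sum_delta.
by apply: eq_bigr => i _; rewrite mxE scale1r.
Qed.

Lemma Mnorm_ge_qform_scalar N A x : is_Mnorm N -> sqnorm x = 1 ->
  N (qform A x)%:M <= N A.
Proof.
move=> [[N0 _ _ _] NM] x1; pose Cs i : 'M[C]_n := x *m delta_mx 0 i.
have CsI : \sum_i (Cs i)^t* *m Cs i = 1%:M.
  rewrite -sum_delta_diag; apply: eq_bigr => i _.
  by rewrite -[(Cs i)^t*]mulmx1 sandwich_col_delta qform1 x1 scale1r.
have := NM n (fun=> A) Cs CsI; under eq_bigr do rewrite sandwich_col_delta.
rewrite -scaler_sumr sum_delta_diag scalemx1 => /le_trans; apply.
exact: bigmax_le.
Qed.

Lemma Mnorm_ge_numrad N A : is_Mnorm N -> (forall A, trnorm A <= N A) ->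
  n%:R * numrad A <= N A.
Proof.
move=> NM Ntr; have [[N0 _ _ _] _] := NM.
have [n0|n0] := posnP n; first by rewrite (_ : n%:R = 0 :> R) ?mul0r // n0.
have n0' : 0 < n%:R :> R by rewrite ltr0n.
rewrite -ler_pdivlMl //; apply: numrad_le => [|x x1].
  by rewrite mulr_ge0 ?invr_ge0 ?ler0n.
rewrite ler_pdivlMl // -trnorm_scalar (le_trans (Ntr _)) //.
exact: Mnorm_ge_qform_scalar.
Qed.

End Minimality.

Theorem theorem3p7 (R : realType) (n : nat) :
  let w := fun A : 'M[R[i]]_n => n%:R * numrad A in
  [/\ is_Mnorm w,
      (forall A, trnorm A <= w A)
    & forall N : 'M[R[i]]_n -> R,
        is_Mnorm N -> (forall A, trnorm A <= N A) -> forall A, w A <= N A].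
Proof.
split; first exact: Mnorm_numrad.
  exact: trnorm_le_numrad.
by move=> N NM Ntr A; apply: Mnorm_ge_numrad.
Qed.
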